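(* If $\psi^A_W$ with $A:W\to\{S,I\}$ is a subsystem state belonging to $M_E$ and $|W|>2$, then there exists $X\supseteq W$ such that $D[X]$ is a directed sub-block.
   Context: $D=(V,A)$ is a directed graph on $V=\{1,\dots,N\}$ with rates $T_{ij}\ge0$, $T_{ij}>0$ iff $(j,i)\in A$, $T_{ii}=0$. A subsystem state is $\psi^A_W$ with $W\subseteq V$ nonempty, $A:W\to\{S,I,R\}$; $S_i,I_i$ are single-node states; for $n\notin W$, $\psi^A_WI_n$ is the state on $W\cup\{n\}$ extending $A$ with $n$ in state $I$; $h^X_k(\psi^A_W)$ changes the state of $k\in W$ to $X$. $\mathrm{IN}(X)$ is the set of nodes from which some member of $X$ is reachable by a directed path; $f_E(X,Y,Z)=1$ iff $\mathrm{IN}(X)\cap\mathrm{IN}(Y)=\emptyset$ in $D-Z$ (else $0$), with the convention $f_E(\{n\},\emptyset,\{k\})=0$. A state $\psi^A_W$, $A:W\to\{S,I\}$, induces: $\psi^A_W$; $h^S_k(\psi^A_W)$ for $k\in W$ with $A_k=I$ and $T_{kn}>0$ for some $n\in W$ with $A_n=I$; and for each $k\in W$, $n\in V\setminus W$ with $T_{kn}>0$: the state $h^S_k(\psi^A_W)I_n$ if $f_E(\{n\},W\setminus\{k\},\{k\})=0$, or the states $h^S_k(\psi^A_W)$, $S_kI_n$, $S_k$ if it equals $1$. $M_E$ is the smallest set of subsystem states containing all $S_i,I_i$ and closed under induced states. $D[X]$ is the subgraph induced on $X$. A graph is biconnected if it has at least three vertices, is connected, and remains connected after deleting any single vertex.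 $D[X]$ is a directed sub-block if some node of $X$ is reachable by a directed path within $D[X]$ from every other node of $X$ and the underlying undirected graph of $D[X]$ is biconnected. *)

From HB Require Import structures.
From mathcomp Require Import all_boot all_order all_algebra.
Set Implicit Arguments. Unset Strict Implicit. Unset Printing Implicit Defensive.
Import Order.TTheory GRing.Theory Num.Theory.

Inductive st := Sst | Ist | Rst.
Definition st_eqb (a b : st) : bool :=
  match a, b with Sst, Sst | Ist, Ist | Rst, Rst => true | _, _ => false end.
Lemma st_eqP : Equality.axiom st_eqb. Proof. by case; case; constructor. Qed.
HB.instance Definition _ := hasDecEq.Build st st_eqP.

Section Defs.
Variable N : nat.
Local Notation V := 'I_N.

(* A subsystem state psi^A_W: psi i = Some (A i) for i in W, None for i not in W. *)
Definition state := {ffun V -> option st}.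
Definition dom (psi : state) : {set V} := [set i | psi i != None].
Definition noR (psi : state) : bool := [forall i, psi i != Some Rst].

Definition single (i : V) (x : st) : state := [ffun j => if j == i then Some x else None].
(* change (or add) the state of node k to x: h^x_k (k in W) and psi I_n (n notin W) *)
Definition setst (psi : state) (k : V) (x : st) : state :=
  [ffun j => if j == k then Some x else psi j].

(* arc u v  <->  (u,v) is an arc of D, i.e. T_{vu} > 0 *)
Variable arc : rel V.

Definition arcD (Z : {set V}) : rel V := fun u v => [&& u \notin Z, v \notin Z & arc u v].
Definition INset (Z X : {set V}) : {set V} :=
  [set u | (u \notin Z) && [exists v in X, (v \notin Z) && connect (arcD Z) u v]].
(* f_E(X,Y,Z), with the convention f_E({n}, emptyset, {k}) = 0 *)
Definition fE (X Y Z : {set V}) : bool :=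
  if [&& Y == set0, #|X| == 1 & #|Z| == 1] then false
  else [disjoint INset Z X & INset Z Y].

(* states induced by psi (psi assumed to have values in {S,I}) *)
Inductive induced (psi : state) : state -> Prop :=
| ind_self : induced psi psi
| ind_rec k n : k \in dom psi -> psi k = Some Ist -> n \in dom psi -> psi n = Some Ist ->
    arc n k -> induced psi (setst psi k Sst)
| ind_inf0 k n : k \in dom psi -> n \notin dom psi -> arc n k ->
    fE [set n] (dom psi :\ k) [set k] = false ->
    induced psi (setst (setst psi k Sst) n Ist)
| ind_inf1a k n : k \in dom psi -> n \notin dom psi -> arc n k ->
    fE [set n] (dom psi :\ k) [set k] = true -> induced psi (setst psi k Sst)
| ind_inf1b k n : k \in dom psi -> n \notin dom psi -> arc n k ->
    fE [set n] (dom psi :\ k) [set k] = true -> induced psi (setst (single k Sst) n Ist)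
| ind_inf1c k n : k \in dom psi -> n \notin dom psi -> arc n k ->
    fE [set n] (dom psi :\ k) [set k] = true -> induced psi (single k Sst).

Inductive inME : state -> Prop :=
| ME_S i : inME (single i Sst)
| ME_I i : inME (single i Ist)
| ME_step psi psi' : inME psi -> noR psi -> induced psi psi' -> inME psi'.

Definition uarc (X : {set V}) : rel V :=
  fun u v => [&& u \in X, v \in X & arc u v || arc v u].
Definition connected_on (X : {set V}) : Prop :=
  forall u v, u \in X -> v \in X -> connect (uarc X) u v.
Definition biconnected_on (X : {set V}) : Prop :=
  2 < #|X| /\ connected_on X /\ (forall w, w \in X -> connected_on (X :\ w)).
Definition darc (X : {set V}) : rel V := fun u v => [&& u \in X, v \in X & arc u v].
Definition directed_subblock (X : {set V}) : Prop :=
  (exists2 r, r \in X & forall u, u \in X -> connect (darc X) u r) /\ biconnected_on X.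

End Defs.

From HB Require Import structures.
From mathcomp Require Import all_boot all_order all_algebra.
Set Implicit Arguments. Unset Strict Implicit. Unset Printing Implicit Defensive.

(* Every state of M_E lives on a vertex set X which is rooted (some vertex of X
   is reachable from all of X inside D[X]) and stays connected after deleting any
   single vertex; once |X| > 2 this is exactly a directed sub-block.  The property
   survives every induced transition.  The only nontrivial one adds a node n to a
   domain W <> {k} with f_E({n}, W \ {k}, {k}) = 0, so some vertex u of D - k
   reaches both n and W \ {k}.  Let z be the last vertex of a path u ~> n that
   still reaches X \ {k} in D - k.  A simple path z ~> X \ {k} and the path
   z ~> n -> k meet only in z (vertices of the first reach X \ {k}, later ones of
   the second do not), so together they form an ear of X through n, and adding an
   ear preserves both properties. *)

Section PathFacts.
Variable T : finType.
Implicit Types (e : rel T) (P : pred T).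

Lemma path_connect_last e x p v :
  path e x p -> v \in x :: p -> connect e v (last x p).
Proof.
move=> pxp vxp; case/splitPl: vxp pxp => p1 p2 <-.
rewrite cat_path last_cat => /andP[_ pp2].
by apply/connectP; exists p2.
Qed.

Lemma path_last_exit e P x s : path e x s -> P x ->
  exists2 z, P z & exists t, [/\ path e z t, last z t = last x s & all (predC P) t].
Proof.
elim/last_ind: s => [|s y IH]; first by move=> _ Px; exists x => //; exists [::].
rewrite rcons_path last_rcons => /andP[/IH{}IH exy] /IH[z Pz [t [pzt tE Pt]]].
case Py: (P y); first by exists y => //; exists [::].
exists z => //; exists (rcons t y); split.
- by rewrite rcons_path pzt tE.
- exact: last_rcons.
- by rewrite all_rcons /= Py.
Qed.

End PathFacts.

Section Subblocks.
Variables (N : nat) (arc : rel 'I_N).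
Local Notation V := 'I_N.
Implicit Types (X Y Z : {set V}) (p q : seq V).

Definition rooted X :=
  exists2 r, r \in X & forall u, u \in X -> connect (darc arc X) u r.

Definition quasi_subblock X :=
  rooted X /\ forall w, w \in X -> connected_on arc (X :\ w).

Lemma uarc_sym X : symmetric (uarc arc X).
Proof. by move=> u v; rewrite /uarc andbCA orbC. Qed.

Lemma connect_darc_uarc X u v : connect (darc arc X) u v -> connect (uarc arc X) u v.
Proof.
by apply: connect_sub => {}u {}v /and3P[uX vX auv]; rewrite connect1 // /uarc uX vX auv.
Qed.

Lemma connect_darc_subset X Y u v :
  X \subset Y -> connect (darc arc X) u v -> connect (darc arc Y) u v.
Proof.
move/subsetP=> sXY; apply: connect_sub => {}u {}v /and3P[uX vX auv].
by rewrite connect1 // /darc !sXY.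
Qed.

Lemma connect_uarc_subset X Y u v :
  X \subset Y -> connect (uarc arc X) u v -> connect (uarc arc Y) u v.
Proof.
move/subsetP=> sXY; apply: connect_sub => {}u {}v /and3P[uX vX auv].
by rewrite connect1 // /uarc !sXY.
Qed.

Lemma path_darc Y x p : path arc x p -> {subset x :: p <= Y} -> path (darc arc Y) x p.
Proof.
move=> pxp sY; apply: (sub_in_path (P := mem Y)) pxp; last exact/allP.
by move=> u v uY vY auv; rewrite /darc uY vY.
Qed.

Lemma rooted_connected X : rooted X -> connected_on arc X.
Proof.
case=> r _ toR u v uX vX; apply: connect_trans (connect_darc_uarc (toR u uX)) _.
by rewrite (sym_connect_sym (@uarc_sym X)) connect_darc_uarc ?toR.
Qed.

Lemma quasi_subblock_small X : rooted X -> #|X| <= 2 -> quasi_subblock X.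
Proof.
move=> rX X_le2; split=> // w wX u v uXw vXw.
have /card_le1_eqP : #|X :\ w| <= 1 by move: X_le2; rewrite (cardsD1 w X) wX.
by move=> /(_ u v uXw vXw) ->; apply: connect0.
Qed.

Lemma quasi_subblock1 i : quasi_subblock [set i].
Proof.
apply: quasi_subblock_small; last by rewrite cards1.
by exists i => [|u /set1P ->]; rewrite ?set11 ?connect0.
Qed.

Lemma quasi_subblock2 n k : arc n k -> quasi_subblock [set n; k].
Proof.
move=> ank; apply: quasi_subblock_small; last by rewrite cardsU1 cards1 addn1 ltnS leq_b1.
exists k => [|u /set2P[->|->]]; rewrite ?set22 ?connect0 // connect1 //.
by rewrite /darc set21 set22.
Qed.

Lemma connect_uarc_path Y x p :
  path arc x p -> {subset x :: p <= Y} -> connect (uarc arc Y) x (last x p).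
Proof. by move=> pxp sY; apply/connect_darc_uarc/connectP; exists p => //; apply: path_darc. Qed.

Lemma rooted_ear X z p q :
  rooted X -> path arc z p -> path arc z q -> last z p \in X -> last z q \in X ->
  rooted (X :|: [set v in z :: p ++ q]).
Proof.
case=> r rX toR pp pq lp lq; set E := _ :|: _.
have XE : X \subset E by apply: subsetUl.
have arm s : path arc z s -> last z s \in X -> {subset z :: s <= z :: p ++ q} ->
    {in z :: s, forall v, connect (darc arc E) v r}.
  move=> ps ls sub v vs; apply: connect_trans (connect_darc_subset XE (toR _ ls)).
  apply: path_connect_last vs; apply: (path_darc (Y := E) ps) => y /sub ye.
  by rewrite in_setU in_set ye orbT.
exists r => [|v]; first by rewrite inE rX.
rewrite inE => /orP[vX|]; first exact: connect_darc_subset XE (toR v vX).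
have sub_p : {subset z :: p <= z :: p ++ q} by move=> y; rewrite -cat_cons mem_cat => ->.
have sub_q : {subset z :: q <= z :: p ++ q}.
  by move=> y; rewrite !inE mem_cat => /orP[->|->]; rewrite ?orbT.
rewrite inE -cat_cons mem_cat => /orP[vp|vq]; first exact: arm p pp lp sub_p v vp.
by apply: (arm q pq lq sub_q); rewrite inE vq orbT.
Qed.

(* Two directed paths from [z] into [X] without common vertex besides [z]:
   read backwards along one arm, they form a path between two vertices of [X]. *)
Definition ear X z p q :=
  [&& path arc z p, path arc z q, last z p \in X, last z q \in X & uniq (z :: p ++ q)].

Lemma ear_sym X z p q : ear X z p q -> ear X z q p.
Proof.
case/and5P=> pp pq lp lq uE; apply/and5P; split=> //.
by rewrite (perm_uniq (_ : perm_eq _ (z :: p ++ q))) // perm_cons perm_catC.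
Qed.

Lemma ear_anchor X Y w z p q t :
  ear X z p q -> {in z :: p ++ q, forall v, v != w -> v \in Y} ->
  t \in z :: p -> t != w -> exists2 b, b \in X :\ w & connect (uarc arc Y) t b.
Proof.
move=> /and5P[pp pq lp lq uE] earY tp tw; case/splitPl: tp pp lp uE earY => p1 p2 p1t.
rewrite cat_path last_cat p1t -catA -cat_cons => /andP[pp1 pp2] lp.
rewrite cat_uniq => /and3P[_ /hasPn p2qNp1 uniq_p2q] earY.
have inY (s : seq V) : {subset s <= (z :: p1) ++ p2 ++ q} -> w \notin s -> {subset s <= Y}.
  by move=> sub ws v vs; apply: earY (sub v vs) _; apply: contraNneq ws => <-.
have tp1 : t \in z :: p1 by rewrite -p1t mem_last.
have [wp2 | wNp2] := boolP (w \in t :: p2).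
  have {}wp2 : w \in p2 by move: wp2; rewrite inE eq_sym (negbTE tw).
  have wNp1 : w \notin z :: p1 by apply: p2qNp1; rewrite mem_cat wp2.
  have wNq : w \notin z :: q.
    rewrite inE negb_or; apply/andP; split.
      by apply: contraNneq wNp1 => ->; apply: mem_head.
    by move: uniq_p2q; rewrite cat_uniq => /and3P[_ /hasPn /(_ w) /contraL ->].
  exists (last z q); first by rewrite !inE lq andbT; apply: contraNneq wNq => <-; apply: mem_last.
  have zt : connect (uarc arc Y) z t.
    rewrite -p1t; apply: (connect_uarc_path pp1 (inY _ _ wNp1)) => v.
    by rewrite mem_cat => ->.
  rewrite (sym_connect_sym (@uarc_sym Y)) in zt; apply: connect_trans zt _.
  apply: (connect_uarc_path pq (inY _ _ wNq)) => v; rewrite !inE !mem_cat.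
  by case/orP=> ->; rewrite ?orbT.
exists (last t p2); first by rewrite !inE lp andbT; apply: contraNneq wNp2 => <-; apply: mem_last.
apply: (connect_uarc_path pp2 (inY _ _ wNp2)) => v; rewrite inE.
by case/orP=> [/eqP -> | vp2]; rewrite mem_cat ?tp1 // mem_cat vp2 orbT.
Qed.

Lemma connected_on_ear_del X w z p q :
  ear X z p q -> connected_on arc (X :\ w) ->
  connected_on arc ((X :|: [set v in z :: p ++ q]) :\ w).
Proof.
move=> Ezpq cXw; set Y := _ :\ w.
have earY : {in z :: p ++ q, forall v, v != w -> v \in Y}.
  by move=> v vE vw; rewrite in_setD1 vw in_setU in_set vE orbT.
have swap : perm_eq (z :: q ++ p) (z :: p ++ q) by rewrite perm_cons perm_catC.
have anchor t : t \in Y -> exists2 b, b \in X :\ w & connect (uarc arc Y) t b.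
  rewrite in_setD1 in_setU in_set => /andP[tw /orP[tX|]].
    by exists t; rewrite ?in_setD1 ?tw ?connect0.
  rewrite -cat_cons mem_cat => /orP[tp|tq]; first exact: ear_anchor Ezpq earY tp tw.
  have earY' : {in z :: q ++ p, forall v, v != w -> v \in Y}.
    by move=> v; rewrite (perm_mem swap); apply: earY.
  by apply: (ear_anchor (ear_sym Ezpq) earY') tw; rewrite inE tq orbT.
have XwY : X :\ w \subset Y by apply/setSD/subsetUl.
move=> u v uY vY; have [a aXw ua] := anchor u uY; have [b bXw vb] := anchor v vY.
apply: connect_trans ua (connect_trans (connect_uarc_subset XwY (cXw a b aXw bXw)) _).
by rewrite (sym_connect_sym (@uarc_sym Y)).
Qed.

Lemma quasi_subblock_ear X z p q :
  quasi_subblock X -> ear X z p q -> quasi_subblock (X :|: [set v in z :: p ++ q]).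
Proof.
move=> [rX cX] Ezpq; split; first by case/and5P: Ezpq => pp pq lp lq _; apply: rooted_ear.
move=> w _; apply: connected_on_ear_del => //.
have [/cX // | wNX] := boolP (w \in X).
have -> : X :\ w = X by apply/setDidPl; rewrite disjoint_sym disjoints1.
exact: rooted_connected rX.
Qed.

Lemma path_arcD_notin Z x p : path (arcD arc Z) x p -> {in p, forall v, v \notin Z}.
Proof.
elim: p x => //= y p IH x /andP[/and3P[_ yZ _] pyp] v.
by rewrite inE => /orP[/eqP -> // | /(IH _ pyp)].
Qed.

Lemma connect_arcD_from Z x y : x \in Z -> connect (arcD arc Z) x y -> y = x.
Proof. by move=> xZ /connectP[[|v p] /=]; [move=> _ -> | rewrite {1}/arcD xZ]. Qed.

Lemma ear_exists X k n u w :
  k \in X -> w \in X :\ k -> arc n k ->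
  connect (arcD arc [set k]) u n -> connect (arcD arc [set k]) u w ->
  exists z p q, ear X z p q /\ n \in z :: p ++ q.
Proof.
move=> kX wXk ank /connectP[s pus ns] uw; set e := arcD arc [set k].
have e_arc : subrel e arc by move=> a b /and3P[].
pose A := [pred v | [exists x in X :\ k, connect e v x]].
have Au : A u by apply/existsP; exists w; rewrite wXk.
have NAk : ~~ A k.
  apply/existsP => -[x /andP[xXk /connect_arcD_from]].
  by rewrite set11 => /(_ isT) xk; move: xXk; rewrite xk setD11.
have [z Az [t0 [pzt0 lt0 NAt0]]] := path_last_exit pus Au.
case/shortenP: pzt0 lt0 => t pzt uzt sub_t lt.
case/existsP: Az => x /andP[xXk /connectP[g0 pzg0 xE]].
case/shortenP: pzg0 xE => g pzg uzg _ xE.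
have Ag : {in z :: g, forall v, A v}.
  by move=> v vg; apply/existsP; exists x; rewrite xXk xE (path_connect_last pzg vg).
exists z, g, (rcons t k); split; last first.
  rewrite ns -lt; move: (mem_last z t); rewrite !inE mem_cat mem_rcons inE.
  by case/orP=> ->; rewrite ?orbT.
apply/and5P; split.
- exact: sub_path pzg.
- by rewrite rcons_path lt -ns ank andbT (sub_path e_arc pzt).
- by move: xXk; rewrite xE in_setD1 => /andP[].
- by rewrite last_rcons.
- have kNt : k \notin t by apply/negP => /(path_arcD_notin pzt); rewrite set11.
  move: uzt; rewrite cons_uniq => /andP[_ ut].
  rewrite -cat_cons cat_uniq uzg rcons_uniq kNt ut /= andbT.
  apply/hasPn => v; rewrite mem_rcons inE => /orP[/eqP -> | vt].
    by apply: contra NAk; apply: Ag.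
  by apply: contra (allP NAt0 v (sub_t v vt)); apply: Ag.
Qed.

Lemma fE_false_source (n k : V) (W : {set V}) :
  W :\ k != set0 -> fE arc [set n] (W :\ k) [set k] = false ->
  exists u w, [/\ w \in W :\ k, connect (arcD arc [set k]) u n
                & connect (arcD arc [set k]) u w].
Proof.
move=> Wk; rewrite /fE (negbTE Wk) /= => /negbT; rewrite -setI_eq0 => /set0Pn[u].
rewrite in_setI !in_set => /andP[/andP[_ /existsP[v /andP[/set1P -> /andP[_ un]]]]].
by case/andP=> _ /existsP[w /andP[wWk /andP[_ uw]]]; exists u, w.
Qed.

Lemma quasi_subblock_extend X k n u w :
  quasi_subblock X -> k \in X -> w \in X :\ k -> arc n k ->
  connect (arcD arc [set k]) u n -> connect (arcD arc [set k]) u w ->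
  exists2 X' : {set V}, X \subset X' & n \in X' /\ quasi_subblock X'.
Proof.
move=> qX kX wXk ank un uw; have [z [p [q [Ezpq nE]]]] := ear_exists kX wXk ank un uw.
exists (X :|: [set v in z :: p ++ q]); first exact: subsetUl.
by rewrite in_setU in_set nE orbT; split=> //; apply: quasi_subblock_ear.
Qed.

End Subblocks.

Section MEInvariant.
Variables (N : nat) (arc : rel 'I_N).
Implicit Types (psi : state N) (k : 'I_N).

Lemma dom_single k x : dom (single k x) = [set k].
Proof. by apply/setP => j; rewrite !inE ffunE; case: (j == k). Qed.

Lemma dom_setst psi k x : dom (setst psi k x) = k |: dom psi.
Proof. by apply/setP => j; rewrite !inE ffunE; case: (j == k). Qed.

Lemma dom_setst_in psi k x : k \in dom psi -> dom (setst psi k x) = dom psi.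
Proof. by move=> kD; rewrite dom_setst; apply/setUidPr; rewrite sub1set. Qed.

Lemma inME_quasi_subblock psi :
  inME arc psi -> exists2 X : {set 'I_N}, dom psi \subset X & quasi_subblock arc X.
Proof.
elim=> [i|i|{}psi _ _ [X dX qX] _ []].
- by exists [set i]; [rewrite dom_single | apply: quasi_subblock1].
- by exists [set i]; [rewrite dom_single | apply: quasi_subblock1].
- by exists X.
- by move=> k n kD *; exists X; rewrite ?dom_setst_in.
- move=> k n kD _ ank fE0; rewrite dom_setst dom_setst_in //.
  have [Wk0 | /fE_false_source/(_ fE0)[u [w [wWk un uw]]]] := eqVneq (dom psi :\ k) set0.
    exists [set n; k]; last exact: quasi_subblock2.
    apply/setUS/subsetP => v vD; move: (in_set0 v); rewrite -Wk0 in_setD1 vD andbT.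
    by move/negbFE/eqP ->; apply: set11.
  have wXk : w \in X :\ k by apply: subsetP wWk; apply: setSD.
  have [X' XX' [nX' qX']] := quasi_subblock_extend qX (subsetP dX k kD) wXk ank un uw.
  by exists X' => //; rewrite subUset sub1set nX' (subset_trans dX XX').
- by move=> k n kD *; exists X; rewrite ?dom_setst_in.
- move=> k n _ _ ank _; exists [set n; k]; last exact: quasi_subblock2.
  by rewrite dom_setst dom_single.
- by move=> k *; exists [set k]; [rewrite dom_single | apply: quasi_subblock1].
Qed.

Lemma inME_directed_subblock psi : inME arc psi -> 2 < #|dom psi| ->
  exists2 X : {set 'I_N}, dom psi \subset X & directed_subblock arc X.
Proof.
case/inME_quasi_subblock=> X dX [rX cX] domP; exists X => //.
split=> //; split; last by split=> //; apply: rooted_connected.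
exact: leq_trans domP (subset_leq_card dX).
Qed.

End MEInvariant.

Local Open Scope ring_scope.

Theorem mainTheorem8 (R : numDomainType) (N : nat) (T : 'I_N -> 'I_N -> R)
  (HT0 : forall i j, 0 <= T i j) (HTd : forall i, T i i = 0)
  (psi : state N) :
  inME [rel j i | 0 < T i j] psi -> noR psi -> (2 < #|dom psi|)%N ->
  exists2 X : {set 'I_N}, dom psi \subset X & directed_subblock [rel j i | 0 < T i j] X.
Proof. by move=> psiME _; apply: inME_directed_subblock psiME. Qed.
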